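(* Let $Q$ be a topological $k$-quandle and let $L^1_C$ and $L^2_{C'}$ be $k$-colored links. Then $\hat{J}_Q(L^1_C\amalg L^2_{C'})$ is homeomorphic to $\hat{J}_Q(L^1_C)\times\hat{J}_Q(L^2_{C'})$, where $L^1_C\amalg L^2_{C'}$ denotes the disjoint (split) sum of the two colored links.
   Context: A quandle is a set with a binary operation $\triangleright$ such that $x\triangleright x=x$, each right translation $x\mapsto x\triangleright y$ is a bijection (inverse written $x\mapsto x\triangleright^{-1}y$), and $(x\triangleright y)\triangleright z=(x\triangleright z)\triangleright(y\triangleright z)$. A $k$-quandle is a set with operations $\triangleright_1,\dots,\triangleright_k$, each making it a quandle, with $(x\triangleright_i y)\triangleright_j z=(x\triangleright_j z)\triangleright_i(y\triangleright_j z)$ for all $i,j,x,y,z$. A topological $k$-quandle is a $k$-quandle with a topology making all $\triangleright_i,\triangleright_i^{-1}:Q\times Q\to Q$ continuous. A $k$-colored link is an oriented link whose components are each labeled by one of the colors $1,\dots,k$, considered up to orientation- and color-preserving ambient isotopy. A $k$-colored $n$-braid ${}^v_w\sigma$ is an $n$-strand braid (oriented top to bottom) with colored strands, $v$ and $w$ being the color tuples at the top and bottom ends read left to right; the closure of ${}^v_v\sigma$ joins each top end to the bottom end in the same position and is a $k$-colored link, and every $k$-colored link arises this way. For $v$ and $w$ differing by a swap of entries $i,i+1$, the elementary colored braid ${}^v_w\sigma_i$ induces the homeomorphism $Q^n\to Q^n$, $x\mapsto x'$ with $x'_j=x_j$ for $j\ne i,i+1$, $x'_i=x_{i+1}$,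 $x'_{i+1}=x_i\triangleright_{v_{i+1}}x_{i+1}$; ${}^w_v\sigma_i^{-1}$ induces its inverse; a product ${}^{v^1}_{v^2}\sigma_{i_1}^{\pm}\cdots{}^{v^m}_{v^{m+1}}\sigma_{i_m}^{\pm}$ induces the composite ${}^{v^m}_{v^{m+1}}\sigma_{i_m}^{\pm}\circ\cdots\circ{}^{v^1}_{v^2}\sigma_{i_1}^{\pm}$. For $L_C=\overline{{}^v_v\sigma}$, $\hat{J}_Q(L_C)\subseteq Q^n$ is the space of fixed points of the map ${}^v_v\sigma:Q^n\to Q^n$ (with subspace topology); up to homeomorphism it depends only on the colored link $L_C$. *)

From HB Require Import structures.
From mathcomp Require Import all_boot all_order all_algebra.
From mathcomp Require Import all_classical all_reals all_analysis.
Set Implicit Arguments. Unset Strict Implicit. Unset Printing Implicit Defensive.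
Local Open Scope classical_set_scope.

(* op i x y = x |>_i y,  opinv i x y = x |>_i^{-1} y  (colors 0..k-1). *)
Definition is_top_kquandle (k : nat) (Q : topologicalType)
  (op opinv : 'I_k -> Q -> Q -> Q) : Prop :=
  (forall i x, op i x x = x) /\
  (forall i y, cancel (fun x => op i x y) (fun x => opinv i x y)) /\
  (forall i y, cancel (fun x => opinv i x y) (fun x => op i x y)) /\
  (forall i j x y z, op j (op i x y) z = op i (op j x z) (op j y z)) /\
  (forall i, continuous (fun p : Q * Q => op i p.1 p.2)) /\
  (forall i, continuous (fun p : Q * Q => opinv i p.1 p.2)).

Definition homeomorphic (X Y : topologicalType) (A : set X) (B : set Y) : Prop :=
  exists (f : X -> Y) (g : Y -> X),
    (forall x, A x -> B (f x)) /\ (forall y, B y -> A (g y)) /\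
    (forall x, A x -> g (f x) = x) /\ (forall y, B y -> f (g y) = y) /\
    {within A, continuous f} /\ {within B, continuous g}.

(* A colored n-braid word: top colors c : 'I_n -> 'I_k and a list of letters
   (i, true) = sigma_i, (i, false) = sigma_i^{-1}, with 0-based strand index i
   acting on positions i and i+1 (so i.+1 < n is required). *)
Definition swapn (i j : nat) : nat :=
  if j == i then i.+1 else if j == i.+1 then i else j.

Definition cswap (k n : nat) (i : nat) (c : 'I_n -> 'I_k) : 'I_n -> 'I_k :=
  fun j => c (insubd j (swapn i j)).

Definition valid_word (n : nat) (w : seq (nat * bool)) : bool :=
  all (fun p => p.1.+1 < n) w.

Fixpoint final_colors (k n : nat) (c : 'I_n -> 'I_k) (w : seq (nat * bool))
  : 'I_n -> 'I_k :=
  if w is p :: w' then final_colors (cswap p.1 c) w' else c.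

Section BraidMap.
Variables (k : nat) (Q : Type) (op opinv : 'I_k -> Q -> Q -> Q).

Definition gen_map (n : nat) (c : 'I_n -> 'I_k) (i : nat) (b : bool)
  (x : 'I_n -> Q) : 'I_n -> Q :=
  fun j =>
    let at_ m := x (insubd j m) in
    let col m := c (insubd j m) in
    if b then
      (* sigma_i: x'_i = x_{i+1}, x'_{i+1} = x_i |>_{c_{i+1}} x_{i+1} *)
      (if val j == i then at_ i.+1
       else if val j == i.+1 then op (col i.+1) (at_ i) (at_ i.+1)
       else x j)
    else
      (* sigma_i^{-1} with top colors c: inverse of sigma_i with top colors
         cswap i c: x'_i = x_{i+1} |>^{-1}_{c_i} x_i, x'_{i+1} = x_i *)
      (if val j == i then opinv (col i) (at_ i.+1) (at_ i)
       else if val j == i.+1 then at_ i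
       else x j).

Fixpoint braid_map (n : nat) (c : 'I_n -> 'I_k) (w : seq (nat * bool))
  (x : 'I_n -> Q) : 'I_n -> Q :=
  if w is p :: w' then braid_map (cswap p.1 c) w' (gen_map c p.1 p.2 x) else x.
End BraidMap.

(* J-hat_Q of the closure of the colored braid (c, w): fixed points of the
   induced map on Q^n (product topology), as a subset of Q^n. *)
Definition Jhat (k : nat) (Q : topologicalType) (op opinv : 'I_k -> Q -> Q -> Q)
  (n : nat) (c : 'I_n -> 'I_k) (w : seq (nat * bool)) : set {ptws 'I_n -> Q} :=
  [set x : {ptws 'I_n -> Q} | braid_map op opinv c w x = x].

(* ---------- juxtaposition of colored braids (closure = split sum) ---------- *)
Definition cat_colors (k n m : nat) (c1 : 'I_n -> 'I_k) (c2 : 'I_m -> 'I_k)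
  : 'I_(n + m) -> 'I_k :=
  fun j => match fintype.split j with inl a => c1 a | inr b => c2 b end.

Definition cat_words (n : nat) (w1 w2 : seq (nat * bool)) : seq (nat * bool) :=
  w1 ++ map (fun p => (p.1 + n, p.2)) w2.

From HB Require Import structures.
From mathcomp Require Import all_boot all_order all_algebra.
From mathcomp Require Import all_classical all_reals all_analysis.
From mathcomp Require Import zify.
Set Implicit Arguments. Unset Strict Implicit. Unset Printing Implicit Defensive.
Local Open Scope classical_set_scope.

(* Place the braid of L^2 to the right of the braid of L^1.  Every letter of
   the juxtaposed word acts on strands of one block only and leaves the other
   block untouched, so the induced map on Q^(n+m) = Q^n * Q^m is the product
   of the two induced maps; its fixed points are therefore the pairs of fixed
   points, and cutting a point of Q^(n+m) into its two blocks is a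
   homeomorphism of product spaces. *)

Section Blocks.
Variables (T : Type) (n m : nat).

Definition lpart (x : 'I_(n + m) -> T) : 'I_n -> T := fun a => x (lshift m a).
Definition rpart (x : 'I_(n + m) -> T) : 'I_m -> T := fun b => x (rshift n b).
Definition cat_fun (y : 'I_n -> T) (z : 'I_m -> T) : 'I_(n + m) -> T :=
  fun j => match fintype.split j with inl a => y a | inr b => z b end.

Lemma lpart_cat y z : lpart (cat_fun y z) = y.
Proof. by apply: funext => a; rewrite /lpart /cat_fun (unsplitK (inl a)). Qed.

Lemma rpart_cat y z : rpart (cat_fun y z) = z.
Proof. by apply: funext => b; rewrite /rpart /cat_fun (unsplitK (inr b)). Qed.

Lemma cat_fun_parts x : cat_fun (lpart x) (rpart x) = x.
Proof. by apply: funext => j; rewrite /cat_fun -[in RHS](splitK j); case: (fintype.split j). Qed.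

Lemma eq_parts x y : lpart x = lpart y -> rpart x = rpart y -> x = y.
Proof. by move=> eql eqr; rewrite -(cat_fun_parts x) -(cat_fun_parts y) eql eqr. Qed.

End Blocks.

Lemma insubd_lshift n m (a : 'I_n) t :
  t < n -> insubd (lshift m a) t = lshift m (insubd a t).
Proof.
move=> tn; apply: val_inj; rewrite /= !val_insubd tn.
by have -> : t < n + m by lia.
Qed.

Lemma insubd_rshift n m (b : 'I_m) t :
  t < m -> insubd (rshift n b) (n + t) = rshift n (insubd b t).
Proof.
move=> tm; apply: val_inj; rewrite /= !val_insubd tm.
by have -> : n + t < n + m by lia.
Qed.

Lemma swapn_lt i n j : i.+1 < n -> j < n -> swapn i j < n.
Proof. by rewrite /swapn; case: eqP => [->|_]; [|case: eqP => [->|_]]; lia. Qed.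

Lemma swapnD i n j : swapn (i + n) (n + j) = n + swapn i j.
Proof.
rewrite /swapn -addSn !(addnC _ n) !eqn_add2l.
by case: eqP => //; case: eqP.
Qed.

Section Letters.
Variables (k : nat) (Q : Type) (op opinv : 'I_k -> Q -> Q -> Q).
Implicit Types (i : nat) (b : bool).

Lemma cswap_out N (c : 'I_N -> 'I_k) i (j : 'I_N) :
  val j != i -> val j != i.+1 -> cswap i c j = c j.
Proof. by move=> /negPf ji /negPf jSi; rewrite /cswap /swapn ji jSi valKd. Qed.

Lemma gen_map_out N (c : 'I_N -> 'I_k) i b x (j : 'I_N) :
  val j != i -> val j != i.+1 -> gen_map op opinv c i b x j = x j.
Proof. by move=> /negPf ji /negPf jSi; rewrite /gen_map ji jSi; case: b. Qed.

Variables (n m : nat).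
Implicit Types (C : 'I_(n + m) -> 'I_k) (x : 'I_(n + m) -> Q).

Lemma lpart_cswap_low C i : i.+1 < n -> lpart (cswap i C) = cswap i (lpart C).
Proof.
move=> iSn; apply: funext => a; rewrite /lpart /cswap /=.
by rewrite insubd_lshift // swapn_lt.
Qed.

Lemma rpart_cswap_low C i : i.+1 < n -> rpart (cswap i C) = rpart C.
Proof. by move=> iSn; apply: funext => b; rewrite /rpart cswap_out //=; lia. Qed.

Lemma rpart_cswap_high C i : i.+1 < m -> rpart (cswap (i + n) C) = cswap i (rpart C).
Proof.
move=> iSm; apply: funext => b; rewrite /rpart /cswap /= swapnD.
by rewrite insubd_rshift // swapn_lt.
Qed.

Lemma lpart_gen_map_low C i b x : i.+1 < n ->
  lpart (gen_map op opinv C i b x) = gen_map op opinv (lpart C) i b (lpart x).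
Proof.
move=> iSn; apply: funext => a; rewrite /lpart /gen_map /=.
by rewrite !insubd_lshift //; lia.
Qed.

Lemma rpart_gen_map_low C i b x : i.+1 < n -> rpart (gen_map op opinv C i b x) = rpart x.
Proof. by move=> iSn; apply: funext => a; rewrite /rpart gen_map_out //=; lia. Qed.

Lemma lpart_gen_map_high C i b x : i.+1 < m ->
  lpart (gen_map op opinv C (i + n) b x) = lpart x.
Proof.
move=> iSm; apply: funext => a; have an := ltn_ord a.
by rewrite /lpart gen_map_out //=; lia.
Qed.

Lemma rpart_gen_map_high C i b x : i.+1 < m ->
  rpart (gen_map op opinv C (i + n) b x) = gen_map op opinv (rpart C) i b (rpart x).
Proof.
move=> iSm; apply: funext => a; rewrite /rpart /gen_map /=.
by rewrite -addSn !(addnC _ n) !eqn_add2l !insubd_rshift //; lia.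
Qed.

End Letters.

Definition shift_word (n : nat) (w : seq (nat * bool)) : seq (nat * bool) :=
  map (fun p => (p.1 + n, p.2)) w.

Section Braids.
Variables (k : nat) (Q : Type) (op opinv : 'I_k -> Q -> Q -> Q).
Local Notation braid := (braid_map op opinv).

Lemma braid_map_cat N (c : 'I_N -> 'I_k) w1 w2 x :
  braid c (w1 ++ w2) x = braid (final_colors c w1) w2 (braid c w1 x).
Proof. by elim: w1 c x => /=. Qed.

Variables (n m : nat).
Implicit Types (C : 'I_(n + m) -> 'I_k) (x : 'I_(n + m) -> Q).

Lemma lpart_braid_map_low C w x : valid_word n w ->
  lpart (braid C w x) = braid (lpart C) w (lpart x).
Proof.
elim: w C x => [|[i b] w IHw] C x //= /andP[/= iSn vw].
by rewrite IHw // lpart_cswap_low // lpart_gen_map_low.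
Qed.

Lemma rpart_braid_map_low C w x : valid_word n w -> rpart (braid C w x) = rpart x.
Proof.
elim: w C x => [|[i b] w IHw] C x //= /andP[/= iSn vw].
by rewrite IHw // rpart_gen_map_low.
Qed.

Lemma rpart_final_colors_low C w : valid_word n w -> rpart (final_colors C w) = rpart C.
Proof.
elim: w C => [|[i b] w IHw] C //= /andP[/= iSn vw].
by rewrite IHw // rpart_cswap_low.
Qed.

Lemma lpart_braid_map_shift C w x : valid_word m w ->
  lpart (braid C (shift_word n w) x) = lpart x.
Proof.
elim: w C x => [|[i b] w IHw] C x //= /andP[/= iSm vw].
by rewrite IHw // lpart_gen_map_high.
Qed.

Lemma rpart_braid_map_shift C w x : valid_word m w ->
  rpart (braid C (shift_word n w) x) = braid (rpart C) w (rpart x).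
Proof.
elim: w C x => [|[i b] w IHw] C x //= /andP[/= iSm vw].
by rewrite IHw // rpart_cswap_high // rpart_gen_map_high.
Qed.

Lemma braid_map_cat_words c1 c2 w1 w2 x : valid_word n w1 -> valid_word m w2 ->
  braid (cat_colors c1 c2) (cat_words n w1 w2) x =
  cat_fun (braid c1 w1 (lpart x)) (braid c2 w2 (rpart x)).
Proof.
move=> vw1 vw2; rewrite /cat_words -/(shift_word n w2) braid_map_cat.
apply: eq_parts; rewrite ?lpart_cat ?rpart_cat.
- by rewrite lpart_braid_map_shift // lpart_braid_map_low // lpart_cat.
- rewrite rpart_braid_map_shift // rpart_final_colors_low //.
  by rewrite rpart_braid_map_low // rpart_cat.
Qed.

End Braids.

Lemma Jhat_cat_words k (Q : topologicalType) (op opinv : 'I_k -> Q -> Q -> Q)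
    n m (c1 : 'I_n -> 'I_k) (c2 : 'I_m -> 'I_k) w1 w2 (x : {ptws 'I_(n + m) -> Q}) :
  valid_word n w1 -> valid_word m w2 ->
  Jhat op opinv (cat_colors c1 c2) (cat_words n w1 w2) x <->
  Jhat op opinv c1 w1 (lpart x) /\ Jhat op opinv c2 w2 (rpart x).
Proof.
move=> vw1 vw2; rewrite /Jhat /= braid_map_cat_words //.
split=> [fixed|[-> ->]]; last exact: cat_fun_parts.
by split; rewrite -[in RHS]fixed ?lpart_cat ?rpart_cat.
Qed.

Lemma continuous_ptws (X : topologicalType) (I : Type) (Q : topologicalType)
    (f : X -> {ptws I -> Q}) :
  (forall i, continuous (fun x => f x i)) -> continuous f.
Proof.
move=> fi_cont x; apply/cvg_sup => i.
rewrite cvg_image; last by rewrite eqEsubset; split=> v // _; exists (fun=> v).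
apply: cvg_trans (fi_cont i x) => W /= nbhsW.
exists ((fun g : {ptws I -> Q} => g i) @^-1` W) => //.
by rewrite eqEsubset; split => [_ [g + <-]//|v Wv]; exists (fun=> v).
Qed.

Section PointwiseBlocks.
Variables (Q : topologicalType) (n m : nat).

Lemma lpart_continuous :
  continuous (fun x : {ptws 'I_(n + m) -> Q} => (lpart x : {ptws 'I_n -> Q})).
Proof. by apply: continuous_ptws => a; exact: proj_continuous. Qed.

Lemma rpart_continuous :
  continuous (fun x : {ptws 'I_(n + m) -> Q} => (rpart x : {ptws 'I_m -> Q})).
Proof. by apply: continuous_ptws => b; exact: proj_continuous. Qed.

Lemma cat_fun_continuous :
  continuous (fun p : {ptws 'I_n -> Q} * {ptws 'I_m -> Q} =>
                (cat_fun p.1 p.2 : {ptws 'I_(n + m) -> Q})).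
Proof.
apply: continuous_ptws => j; rewrite /cat_fun; case: (fintype.split j) => [a|b].
- move=> p; apply: (@continuous_comp _ _ _ fst (fun y : {ptws 'I_n -> Q} => y a)).
    exact: cvg_fst.
  exact: proj_continuous.
- move=> p; apply: (@continuous_comp _ _ _ snd (fun z : {ptws 'I_m -> Q} => z b)).
    exact: cvg_snd.
  exact: proj_continuous.
Qed.

Lemma homeomorphic_parts (A : set {ptws 'I_(n + m) -> Q})
    (B1 : set {ptws 'I_n -> Q}) (B2 : set {ptws 'I_m -> Q}) :
  (forall x, A x <-> B1 (lpart x) /\ B2 (rpart x)) -> homeomorphic A (B1 `*` B2).
Proof.
move=> AE.
exists (fun x => ((lpart x : {ptws 'I_n -> Q}), (rpart x : {ptws 'I_m -> Q}))).
exists (fun p => cat_fun p.1 p.2).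
split; [by move=> x /AE|split; [|split; [|split; [|split]]]].
- by move=> [y z] /= [B1y B2z]; apply/AE; rewrite lpart_cat rpart_cat.
- by move=> x _; exact: cat_fun_parts.
- by move=> [y z] _; rewrite lpart_cat rpart_cat.
- apply: continuous_subspaceT => x.
  exact: (cvg_pair (@lpart_continuous x) (@rpart_continuous x)).
- exact/continuous_subspaceT/cat_fun_continuous.
Qed.

End PointwiseBlocks.

Theorem mainTheorem7 (k : nat) (Q : topologicalType)
  (op opinv : 'I_k -> Q -> Q -> Q) (HQ : is_top_kquandle op opinv)
  (n m : nat) (c1 : 'I_n -> 'I_k) (w1 : seq (nat * bool))
  (c2 : 'I_m -> 'I_k) (w2 : seq (nat * bool)) :
  valid_word n w1 -> final_colors c1 w1 = c1 ->
  valid_word m w2 -> final_colors c2 w2 = c2 ->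
  homeomorphic
    (Jhat op opinv (cat_colors c1 c2) (cat_words n w1 w2))
    (Jhat op opinv c1 w1 `*` Jhat op opinv c2 w2).
Proof.
move=> vw1 _ vw2 _; apply: homeomorphic_parts => x.
exact: Jhat_cat_words.
Qed.
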